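(* Let $n$ be a positive integer, $f:\mathbb{Z}_n\to\mathbb C$, and $m,l\le n$ positive integers. Then \[\sum_{r\in\mathbb{Z}_n}|\widehat f(r)|^2\cdot\min\left(\frac{m^2\gcd(r,n)}{n},\,m\right)\le\sum_{1\le k\le l:\ k\mid n}\frac{m^2\phi(k)}{k}G_f(n/k)+\sum_{l<k\le n:\ k\mid n}\frac{mn}{k}G_f(n/k).\]
   Context: The Fourier transform is $\widehat f(s)=\sum_{x\in\mathbb{Z}_n}f(x)e^{-2\pi i xs/n}$. For $r\in\mathbb{Z}_n$, $\gcd(r,n)$ is computed from any integer representative (so $\gcd(0,n)=n$). For a positive divisor $r$ of $n$ and $a\in\mathbb{Z}_n$, $g_f(a,r)=\sum_{x\in\mathbb{Z}_n:\,x=a+jr\text{ for some }j\in\mathbb{Z}_n}f(x)$ and $G_f(r)=\sum_{a=0}^{r-1}|g_f(a,r)|^2$. $\phi$ is Euler's totient function. *)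

From HB Require Import structures.
From mathcomp Require Import all_boot all_order all_algebra.
From Stdlib Require Rdefinitions.
From mathcomp Require Import reals Rstruct trigo.
From mathcomp Require Import complex.
Set Implicit Arguments. Unset Strict Implicit. Unset Printing Implicit Defensive.
Import Order.TTheory GRing.Theory Num.Theory.
Local Open Scope ring_scope.

Local Notation C := (complex.complex Rdefinitions.R).

Definition expi (t : Rdefinitions.R) : C := complex.Complex (cos t) (sin t).

Definition sqnorm (z : C) : Rdefinitions.R := complex.Re z ^+ 2 + complex.Im z ^+ 2.

(* Z_n is represented by 'I_n (n > 0); f : Z_n -> C *)
Definition fourier (n : nat) (f : 'I_n -> C) (s : 'I_n) : C :=
  \sum_(x < n) f x * expi (- (2 * pi * (x%:R * s%:R) / n%:R)).

Definition gf (n : nat) (f : 'I_n -> C) (a r : nat) : C :=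
  \sum_(x < n | [exists j : 'I_n, (x : nat) == modn (addn a (muln j r)) n]) f x.

Definition Gf (n : nat) (f : 'I_n -> C) (r : nat) : Rdefinitions.R :=
  \sum_(0 <= a < r) sqnorm (gf f a r).

(* The key identity (fourier_energy_multiples) says that for k | n the energy
   of f^ on the multiples of k is (n/k) G_f(n/k): writing s = n/k and
   v = e^{2 pi i/s}, the value f^(k t) is the length-s DFT, with respect to
   the primitive root v, of the residue sums g(a) = sum_{x = a mod s} f(x),
   and the finite Parseval identity for length-s DFTs (dft_parseval) turns
   the energy into s * sum_a |g(a)|^2 = s G_f(s).

   Multiplying by the coefficients of the right-hand side and exchanging the
   sum over divisors k with the sum over frequencies r
   (divisor_sum_exchange), the right-hand side becomes
   sum_r |f^(r)|^2 w(gcd(r, n)) for an explicit weight w, and the theorem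
   reduces to the pointwise bound min(m^2 d/n, m) <= w(d)
   (divisor_weight_bound), which follows from sum_{k | d} phi(k) = d. *)
From HB Require Import structures.
From mathcomp Require Import all_boot all_order all_algebra.
From Stdlib Require Rdefinitions.
From mathcomp Require Import reals Rstruct trigo.
From mathcomp Require Import complex.
From mathcomp Require Import ring lra zify.
From mathcomp Require cyclic.
Set Implicit Arguments. Unset Strict Implicit. Unset Printing Implicit Defensive.
Import Order.TTheory GRing.Theory Num.Theory.
Local Open Scope ring_scope.

Local Notation R := Rdefinitions.R.
Local Notation C := (complex.complex Rdefinitions.R).
Local Notation "x %:C" := (complex.real_complex R x).

Lemma sqnorm_conj (z : C) : (sqnorm z)%:C = z * z^*.
Proof.
case: z => a b; rewrite /sqnorm /=; apply/eqP; rewrite eq_complex /=.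
by apply/andP; split; apply/eqP; ring.
Qed.

Lemma sqnorm_ge0 (z : C) : 0 <= sqnorm z.
Proof. by rewrite /sqnorm addr_ge0 // sqr_ge0. Qed.

Lemma expiD (a b : R) : expi (a + b) = expi a * expi b.
Proof.
rewrite /expi cosD sinD; apply/eqP; rewrite eq_complex /=.
by apply/andP; split; apply/eqP; ring.
Qed.

Lemma expiN (a : R) : expi (- a) = (expi a)^*.
Proof. by rewrite /expi cosN sinN. Qed.

Lemma expi_unit (a : R) : expi a * (expi a)^* = 1.
Proof. by rewrite -sqnorm_conj /sqnorm /= cos2Dsin2. Qed.

Lemma expi_mulrn (a : R) (N : nat) : expi (a * N%:R) = expi a ^+ N.
Proof.
elim: N => [|N IH]; first by rewrite mulr0 expr0 /expi cos0 sin0.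
by rewrite -addn1 natrD mulrDr mulr1 expiD IH exprD expr1.
Qed.

(* e^{i a} = 1 has no solution with 0 < a < 2 pi: cos a = 1 would force
   |cos (a/2)| = 1, hence sin (a/2) = 0, contradicting 0 < a/2 < pi. *)
Lemma expi_neq1 (a : R) : 0 < a < 2 * pi -> expi a != 1.
Proof.
move=> /andP[a_gt0 a_lt2pi]; apply/negP=> /eqP expi_a.
have cos_a : cos a = 1.
  by move/eqP: expi_a; rewrite /expi eq_complex /= => /andP[/eqP -> _].
have cos_half2 : cos (a / 2) ^+ 2 = 1.
  have a_half : a = (a / 2) *+ 2 by rewrite mulr2n; field.
  by move: cos_a; rewrite [in cos a]a_half cos_mulr2n mulr2n; lra.
have : `|cos (a / 2)| = 1.
  apply/eqP; rewrite -(@eqrXn2 _ 2) // ?normr_ge0 //.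
  by rewrite real_normK ?num_real // cos_half2 expr1n.
move/cos1sin0; apply/eqP; rewrite gt_eqF // sin_gt0_pi //.
by apply/andP; split; lra.
Qed.

(* e^{2 pi i/n} is a primitive n-th root of unity: its order m divides n,
   and m < n is excluded by expi_neq1. *)
Lemma expi_prim_root (n : nat) : (0 < n)%N ->
  n.-primitive_root (expi (2 * pi / n%:R)).
Proof.
move=> n_gt0; set w := expi _.
have nR_gt0 : (0 : R) < n%:R by rewrite ltr0n.
have wn : w ^+ n = 1.
  by rewrite /w -expi_mulrn divfK ?gt_eqF // /expi mulr_natl cos2pi sin2pi.
have [m w_m m_dvd_n] := prim_order_exists n_gt0 wn.
have m_gt0 := prim_order_gt0 w_m.
have [m_lt_n|n_lt_m|<- //] := ltngtP m n; last first.
  by move: n_lt_m; rewrite ltnNge dvdn_leq.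
have := prim_expr_order w_m; rewrite /w -expi_mulrn => /eqP.
apply/contraLR => _; apply: expi_neq1.
have pi_gt0 : (0 : R) < pi := pi_gt0 _.
have mR_gt0 : (0 : R) < m%:R by rewrite ltr0n.
have m_lt_nR : (m%:R : R) < n%:R by rewrite ltr_nat.
apply/andP; split; first by rewrite !mulr_gt0 // ?invr_gt0.
by rewrite mulrAC ltr_pdivrMr // ltr_pM2l //; lra.
Qed.

Lemma sum_prim_root_pow (F : idomainType) (s c : nat) (v : F) :
  s.-primitive_root v ->
  \sum_(t < s) (v ^+ c) ^+ t = if (s %| c)%N then s%:R else 0.
Proof.
move=> v_prim; case: ifP => [/dvdnP[q ->]|s_ndvd_c].
  rewrite mulnC exprM (prim_expr_order v_prim) expr1n.
  by rewrite (eq_bigr (fun=> 1)) ?sumr_const ?card_ord // => t _; rewrite expr1n.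
have vc_neq1 : v ^+ c - 1 != 0 by rewrite subr_eq0 -(prim_order_dvd v_prim) s_ndvd_c.
apply/eqP; rewrite -(mulrI_eq0 _ (lregP vc_neq1)) -subrX1.
by rewrite -exprM mulnC exprM (prim_expr_order v_prim) expr1n subrr.
Qed.

Lemma dvdn_subn_addn (s a b : nat) : (a < s)%N -> (b < s)%N ->
  (s %| s - a + b)%N = (a == b).
Proof.
move=> a_lt_s b_lt_s; have [a_lt_b|b_lt_a|->] := ltngtP a b.
- have -> : (s - a + b = s + (b - a))%N by lia.
  by rewrite dvdn_addr //; apply/negbTE/negP => /dvdn_leq; lia.
- by apply/negbTE/negP => /dvdn_leq; lia.
- by rewrite subnK ?dvdnn // ltnW.
Qed.

Section DFTParseval.

Variables (F : numClosedFieldType) (s : nat) (v : F).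
Hypotheses (v_prim : s.-primitive_root v) (v_unit : v * v^* = 1).

Lemma conj_prim_root_pow (j : nat) : (j <= s)%N -> (v ^+ j)^* = v ^+ (s - j).
Proof.
move=> j_le_s.
have inv_l : v ^+ (s - j) * v ^+ j = 1 by rewrite -exprD subnK // prim_expr_order.
have inv_r : v ^+ j * (v ^+ j)^* = 1 by rewrite rmorphXn -exprMn v_unit expr1n.
by rewrite -[LHS]mul1r -inv_l -mulrA inv_r mulr1.
Qed.

(* Parseval's identity for the length-s DFT g |-> (sum_a g(a) conj(v^(a t)))_t:
   expand the square and apply orthogonality to v^((s - a) + b). *)
Lemma dft_parseval (g : nat -> F) :
  \sum_(t < s) ((\sum_(a < s) g a * (v ^+ (a * t))^*) *
                (\sum_(a < s) g a * (v ^+ (a * t))^*)^*)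
  = s%:R * \sum_(a < s) g a * (g a)^*.
Proof.
have expand (t : 'I_s) : (\sum_(a < s) g a * (v ^+ (a * t))^*) *
                         (\sum_(a < s) g a * (v ^+ (a * t))^*)^*
    = \sum_(a < s) \sum_(b < s) g a * (g b)^* * (v ^+ (s - a + b)) ^+ t.
  rewrite rmorph_sum big_distrl /=; apply: eq_bigr => a _.
  rewrite big_distrr /=; apply: eq_bigr => b _.
  rewrite rmorphM /= conjCK !exprM rmorphXn /= conj_prim_root_pow 1?ltnW //.
  by rewrite exprD exprMn; ring.
rewrite (eq_bigr _ (fun t _ => expand t)) exchange_big mulr_sumr.
apply: eq_bigr => a _; rewrite exchange_big /= (bigD1 a) //= [X in _ + X]big1 ?addr0.
  by rewrite -mulr_sumr sum_prim_root_pow // dvdn_subn_addn // eqxx mulrC.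
move=> b b_neq_a; rewrite -mulr_sumr sum_prim_root_pow // dvdn_subn_addn //.
by rewrite ifF ?mulr0 //; apply/negbTE; rewrite eq_sym.
Qed.

End DFTParseval.

Lemma sum_multiples (V : nmodType) (H : nat -> V) (k s n : nat) : (0 < k)%N ->
  n = (k * s)%N ->
  \sum_(0 <= r < n | (k %| r)%N) H r = \sum_(0 <= t < s) H (k * t)%N.
Proof.
move=> k_gt0 ->; elim: s => [|s IH]; first by rewrite muln0 !big_geq.
rewrite big_nat_recr //= -IH mulnS addnC (big_cat_nat _ (leq_addr _ _)) //=.
congr (_ + _); rewrite big_ltn_cond; last by lia.
rewrite dvdn_mulr // big_nat_cond big1 ?addr0 // => r /andP[/andP[r_gt r_lt]].
have -> : r = (k * s + (r - k * s))%N by lia.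
by rewrite dvdn_addr ?dvdn_mulr // => /dvdn_leq; lia.
Qed.

Definition residue_sum (n : nat) (f : 'I_n -> C) (s a : nat) : C :=
  \sum_(x < n | (x %% s == a)%N) f x.

Lemma sum_by_residue (n s : nat) (f : 'I_n -> C) (h : nat -> C) : (0 < s)%N ->
  \sum_(x < n) f x * h (x %% s)%N = \sum_(a < s) residue_sum f s a * h a.
Proof.
move=> s_gt0; rewrite (partition_big (fun x : 'I_n => Ordinal (ltn_pmod x s_gt0))
  xpredT) //=.
apply: eq_bigr => a _; rewrite big_distrl /=; apply: eq_big => x.
  by rewrite -val_eqE.
by move=> /eqP <-.
Qed.

Lemma gf_residue (n : nat) (f : 'I_n -> C) (s a : nat) : (0 < s)%N ->
  (s %| n)%N -> (a < s)%N -> gf f a s = residue_sum f s a.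
Proof.
move=> s_gt0 s_dvd_n a_lt_s; rewrite /gf; apply: eq_bigl => x.
apply/existsP/idP => [[j /eqP ->]|/eqP x_mod].
  by rewrite modn_dvdm // addnC modnMDl modn_small.
have q_lt_n : (x %/ s < n)%N by apply: leq_ltn_trans (leq_div _ _) (ltn_ord x).
by exists (Ordinal q_lt_n); rewrite /= -x_mod addnC -divn_eq modn_small.
Qed.

Definition dft_at (n : nat) (f : 'I_n -> C) (N : nat) : C :=
  \sum_(x < n) f x * expi (- (2 * pi * (x%:R * N%:R) / n%:R)).

Lemma dft_at_multiple (n k s t : nat) (f : 'I_n -> C) : (0 < k)%N ->
  (0 < s)%N -> n = (k * s)%N ->
  dft_at f (k * t) = \sum_(a < s) residue_sum f s a *
                       ((expi (2 * pi / s%:R)) ^+ (a * t))^*.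
Proof.
move=> k_gt0 s_gt0 n_eq.
rewrite -(sum_by_residue f (fun a => (expi (2 * pi / s%:R) ^+ (a * t))^*) s_gt0).
apply: eq_bigr => x _.
congr (_ * _); have v_prim := expi_prim_root s_gt0.
rewrite -(prim_expr_mod v_prim) modnMml (prim_expr_mod v_prim).
have nR : (n%:R : R) = k%:R * s%:R by rewrite n_eq natrM.
rewrite -expi_mulrn -expiN nR !natrM; congr expi.
have kR : (k%:R : R) != 0 by rewrite pnatr_eq0 -lt0n.
have sR : (s%:R : R) != 0 by rewrite pnatr_eq0 -lt0n.
by field; rewrite sR kR.
Qed.

Lemma fourier_energy_multiples (n k : nat) (f : 'I_n -> C) : (0 < n)%N ->
  (0 < k)%N -> (k %| n)%N ->
  \sum_(r < n | (k %| r)%N) sqnorm (fourier f r) = (n %/ k)%:R * Gf f (n %/ k).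
Proof.
move=> n_gt0 k_gt0 k_dvd_n; set s := (n %/ k)%N.
have n_eq : n = (k * s)%N by rewrite /s mulnC divnK.
have s_gt0 : (0 < s)%N by rewrite /s divn_gt0 // dvdn_leq.
have s_dvd_n : (s %| n)%N by rewrite [in X in (_ %| X)%N]n_eq dvdn_mull.
set v := expi (2 * pi / s%:R).
have energy_dft : \sum_(r < n | (k %| r)%N) sqnorm (fourier f r)
    = \sum_(0 <= t < s) sqnorm (dft_at f (k * t)).
  by rewrite -(big_mkord (fun r => k %| r)%N (sqnorm \o dft_at f))
    (sum_multiples _ k_gt0 n_eq).
have Gf_residues : Gf f s = \sum_(a < s) sqnorm (residue_sum f s a).
  by rewrite /Gf big_mkord; apply: eq_bigr => a _; rewrite gf_residue.
rewrite energy_dft Gf_residues big_mkord; apply: complexI.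
rewrite rmorphM !rmorph_sum /= rmorph_nat.
under eq_bigr do rewrite sqnorm_conj (dft_at_multiple _ _ k_gt0 s_gt0 n_eq).
rewrite dft_parseval ?expi_prim_root ?expi_unit //.
by congr (_ * _); apply: eq_bigr => a _; rewrite sqnorm_conj.
Qed.

Lemma divisor_sum_exchange (n : nat) (f : 'I_n -> C) (b : nat -> R)
    (lo hi : nat) : (0 < n)%N -> (0 < lo)%N ->
  \sum_(lo <= k < hi | (k %| n)%N) b k * n%:R / k%:R * Gf f (n %/ k)
  = \sum_(r < n) sqnorm (fourier f r) *
      \sum_(lo <= k < hi | (k %| gcdn r n)%N) b k.
Proof.
move=> n_gt0 lo_gt0.
have by_energy : \sum_(lo <= k < hi | (k %| n)%N) b k * n%:R / k%:R * Gf f (n %/ k)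
    = \sum_(lo <= k < hi | (k %| n)%N) \sum_(r < n | (k %| r)%N)
        b k * sqnorm (fourier f r).
  rewrite big_nat_cond [RHS]big_nat_cond.
  apply: eq_bigr => k /andP[/andP[lo_le_k _] k_dvd_n].
  have k_gt0 : (0 < k)%N by apply: leq_trans lo_le_k.
  rewrite -mulr_sumr fourier_energy_multiples // natr_div ?unitfE ?pnatr_eq0 -?lt0n //.
  by rewrite !mulrA.
rewrite by_energy; under eq_bigr do rewrite big_mkcond.
rewrite exchange_big /=; apply: eq_bigr => r _.
rewrite big_distrr /= [RHS]big_mkcond [LHS]big_mkcond /=; apply: eq_bigr => k _.
rewrite dvdn_gcd andbC.
by case: (k %| n)%N; case: (k %| r)%N; rewrite /= ?mulr0 // mulrC.
Qed.

Lemma sum_totient_divisors (d l : nat) : (0 < d)%N -> (d <= l)%N ->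
  (\sum_(1 <= k < l.+1 | (k %| d)%N) totient k = d)%N.
Proof.
move=> d_gt0 d_le_l.
rewrite (big_cat_nat _ (n := d.+1)) //= [X in (_ + X)%N]big1_seq ?addn0.
  move: (cyclic.sum_totient_dvd d).
  by rewrite -(big_mkord (fun k => k %| d)%N) big_ltn_cond // dvd0n gtn_eqF.
move=> k /andP[k_dvd_d]; rewrite mem_index_iota => /andP[d_lt_k _].
by move: (dvdn_leq d_gt0 k_dvd_d); lia.
Qed.

(* If d <= l the first sum is exactly
   m^2 d/n; otherwise the term k = d of the second sum already gives m. *)
Lemma divisor_weight_bound (n m l d : nat) : (0 < d)%N -> (d <= n)%N ->
  Num.min ((m ^ 2 * d)%:R / n%:R) (m%:R : R)
  <= \sum_(1 <= k < l.+1 | (k %| d)%N) (m ^ 2 * totient k)%:R / n%:R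
   + \sum_(l.+1 <= k < n.+1 | (k %| d)%N) (m%:R : R).
Proof.
move=> d_gt0 d_le_n.
have second_ge0 : 0 <= \sum_(l.+1 <= k < n.+1 | (k %| d)%N) (m%:R : R).
  exact: sumr_ge0.
have [d_le_l|l_lt_d] := leqP d l.
  rewrite -mulr_suml -natr_sum -big_distrr /= sum_totient_divisors //.
  by rewrite ge_min lerDl second_ge0.
rewrite ge_min; apply/orP; right.
have first_ge0 : 0 <= \sum_(1 <= k < l.+1 | (k %| d)%N)
                        (m ^ 2 * totient k)%:R / (n%:R : R).
  by apply: sumr_ge0 => k _; rewrite divr_ge0.
have d_in : d \in index_iota l.+1 n.+1 by rewrite mem_index_iota ltnS l_lt_d.
rewrite [X in _ + X]big_mkcond (bigD1_seq d d_in (iota_uniq _ _)) /= dvdnn.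
rewrite addrCA lerDl addr_ge0 // sumr_ge0 // => k _.
by case: ifP.
Qed.

Theorem lemma4p6 (n : nat) (f : 'I_n -> complex.complex Rdefinitions.R)
    (m l : nat) :
  (0 < n)%nat -> (0 < m)%nat -> (m <= n)%nat -> (0 < l)%nat -> (l <= n)%nat ->
  \sum_(r < n) sqnorm (fourier f r) *
      Num.min ((m ^ 2 * gcdn r n)%:R / n%:R) (m%:R : Rdefinitions.R)
  <= \sum_(1 <= k < l.+1 | (k %| n)%nat)
        ((m ^ 2 * totient k)%:R / k%:R) * Gf f (n %/ k)
   + \sum_(l.+1 <= k < n.+1 | (k %| n)%nat)
        ((m * n)%:R / k%:R) * Gf f (n %/ k).
Proof.
move=> n_gt0 _ _ _ _.
have nR : (n%:R : R) != 0 by rewrite pnatr_eq0 -lt0n.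
have coef_small (k : nat) : (m ^ 2 * totient k)%:R / k%:R
    = (m ^ 2 * totient k)%:R / n%:R * n%:R / k%:R :> R by rewrite divfK.
have coef_large (k : nat) : (m * n)%:R / k%:R = m%:R * n%:R / k%:R :> R.
  by rewrite natrM.
under [X in _ <= X + _]eq_bigr do rewrite coef_small.
under [X in _ <= _ + X]eq_bigr do rewrite coef_large.
rewrite !divisor_sum_exchange // -big_split /=.
apply: ler_sum => r _; rewrite -mulrDr ler_wpM2l ?sqnorm_ge0 //.
apply: divisor_weight_bound; first by rewrite gcdn_gt0 n_gt0 orbT.
exact: dvdn_leq n_gt0 (dvdn_gcdr _ _).
Qed.
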